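(* For every integer $\ell\ge3$ there exists an admissible partition of $\ell$. Moreover, if $\ell\ge500$, there exists an admissible partition $\mathfrak{a}$ of $\ell$ such that $c^{\mathfrak{a}}((a,b)^6)\ge\ell/200$ for all $(a,b)\in\{3,4,5\}\times\{3,4,5\}$.
   Context: A cyclic partition of $\ell\in\mathbb{N}$ is a tuple $(a_1,\dots,a_t)$ of positive integers with $\sum_i a_i=\ell$, considered up to cyclic rotation, with indices modulo $t$. For a cyclic partition $\mathfrak{a}=(a_1,\dots,a_t)$ and a finite sequence $a'=(a'_1,\dots,a'_{t'})$, let $c^{\mathfrak{a}}(a')=|\{i\in[t]: a_{(i+j)\bmod t}=a'_j\text{ for all }j\in[t']\}|$ (where $x \bmod t$ denotes the element of $[t]$ congruent to $x$); e.g. for $\mathfrak{a}=(a)$, $c^{\mathfrak{a}}(a,a)=1$. Write $c^{\mathfrak{a}}(a,b)$ for $c^{\mathfrak{a}}((a,b))$. A cyclic partition $\mathfrak{a}$ is admissible if all its parts lie in $\{3,4,5\}$ and $c^{\mathfrak{a}}(a,b)=c^{\mathfrak{a}}(b,a)$ for all $a,b\in\{3,4,5\}$. For a sequence $s$, $s^m$ denotes the concatenation of $m$ copies of $s$; so $(a,b)^6$ is a sequence of length $12$. *)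

From mathcomp Require Import all_boot.
Set Implicit Arguments. Unset Strict Implicit. Unset Printing Implicit Defensive.

(* A cyclic partition is represented by a representative sequence
   a = [:: a_1; ...; a_t] (0-based in Rocq). All notions below are
   invariant under rotation. *)

Definition cyc_count (a s : seq nat) : nat :=
  let t := size a in
  #|[set i : 'I_t | [forall j : 'I_(size s),
        nth 0 a ((i + j) %% t) == nth 0 s j]]|.

Definition seq_pow (s : seq nat) (m : nat) : seq nat := flatten (nseq m s).

Definition parts345 : seq nat := [:: 3; 4; 5].

Definition cyc_partition (l : nat) (a : seq nat) : Prop :=
  all (fun x => 0 < x) a /\ sumn a = l.

Definition admissible (a : seq nat) : Prop :=
  all (fun x => x \in parts345) a /\
  forall x y, x \in parts345 -> y \in parts345 ->
    cyc_count a [:: x; y] = cyc_count a [:: y; x].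

From mathcomp Require Import all_boot zify.

(* c(x, y) counts the pair (x, y) among the cyclic adjacencies of the word, so
   reversing the word swaps c(x, y) and c(y, x); hence every word whose reversal
   is one of its rotations is admissible. For l >= 3 the word 3...3e with
   e = 3 + (l mod 3) has this property. For l >= 877 take the palindrome
   B^k P (rev B)^k, where P is a palindromic filler and the block B of weight 432
   contains, together with rev B, nine occurrences of every (x, y)^6; since
   linear occurrences are cyclic ones, each (x, y)^6 occurs at least
   9k >= l/200 times. The range 500 <= l < 877 is checked by computation on an
   explicit family of words. *)

Lemma card_ord_count (t : nat) (Q : nat -> bool) :
  #|[set i : 'I_t | Q i]| = count Q (iota 0 t).
Proof.
rewrite -sum1dep_card -sum1_count -(big_mkord Q (fun _ => 1)).
by rewrite /index_iota subn0.
Qed.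

Lemma forall_ord_all n (F : nat -> bool) :
  [forall j : 'I_n, F j] = all F (iota 0 n).
Proof.
apply/forallP/allP => [F_ j | F_ j].
  by rewrite mem_iota add0n => /andP[_ lt_jn]; exact: (F_ (Ordinal lt_jn)).
by apply: F_; rewrite mem_iota add0n ltn_ord.
Qed.

Definition cyc_match (a s : seq nat) (i : nat) : bool :=
  all (fun j => nth 0 a ((i + j) %% size a) == nth 0 s j) (iota 0 (size s)).

Lemma cyc_countE a s : cyc_count a s = count (cyc_match a s) (iota 0 (size a)).
Proof.
rewrite /cyc_count -card_ord_count; apply: eq_card => i.
by rewrite !inE (forall_ord_all _ (fun j => nth 0 a ((i + j) %% size a) == nth 0 s j)).
Qed.

Definition pair_count (a : seq nat) (x y : nat) : nat :=
  count_mem (x, y) (zip a (rot 1 a)).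

Lemma cyc_count_pair a x y : cyc_count a [:: x; y] = pair_count a x y.
Proof.
rewrite cyc_countE /pair_count -(mkseq_nth (0, 0) (zip a (rot 1 a))) /mkseq.
rewrite count_map size_zip size_rot minnn.
apply: eq_in_count => i; rewrite mem_iota add0n => /andP[_ lt_ia] /=.
rewrite nth_zip ?size_rot // /cyc_match /= addn0 (modn_small lt_ia) andbT.
case: a lt_ia => [//|z a] /= lt_ia; rewrite rot1_cons nth_rcons.
have [lt_ia' | ge_ia] := ltnP i (size a).
  by rewrite modn_small ?addn1.
have -> : i = size a by lia.
by rewrite eqxx addn1 modnn xpair_eqE.
Qed.

Lemma take_zip (A B : Type) n (s : seq A) (t : seq B) :
  take n (zip s t) = zip (take n s) (take n t).
Proof. by elim: s t n => [|x s IH] [|y t] [|n] //=; rewrite ?IH //; case: take. Qed.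

Lemma drop_zip (A B : Type) n (s : seq A) (t : seq B) :
  drop n (zip s t) = zip (drop n s) (drop n t).
Proof. by elim: s t n => [|x s IH] [|y t] [|n] //=; rewrite ?IH //; case: drop. Qed.

Lemma rot_zip (A B : Type) k (s : seq A) (t : seq B) : size s = size t ->
  rot k (zip s t) = zip (rot k s) (rot k t).
Proof. by move=> Est; rewrite /rot drop_zip take_zip zip_cat // !size_drop Est. Qed.

Lemma pair_count_rot k a x y : pair_count (rot k a) x y = pair_count a x y.
Proof.
rewrite /pair_count rot_rot -rot_zip ?size_rot //.
by apply/permP; rewrite perm_rot.
Qed.

Lemma pair_count_rev a x y : pair_count (rev a) x y = pair_count a y x.
Proof.
rewrite /pair_count -rev_rotr -rev_zip ?size_rotr // count_rev.
have swap (s t : seq nat) : count_mem (x, y) (zip s t) = count_mem (y, x) (zip t s).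
  by elim: s t => [|u s IH] [|v t] //=; rewrite IH !xpair_eqE andbC.
rewrite swap -{2}(rotrK 1 a).
exact: (pair_count_rot _ a).
Qed.

Lemma pair_count_sym k a x y :
  rev a = rot k a -> pair_count a x y = pair_count a y x.
Proof. by move=> rev_a; rewrite -pair_count_rev rev_a pair_count_rot. Qed.

Lemma cyc_partition_parts l a :
  all (fun x => x \in parts345) a -> sumn a = l -> cyc_partition l a.
Proof.
move=> a345 suma; split=> //.
by apply: sub_all a345 => x; rewrite !inE => /or3P[]/eqP->.
Qed.

Lemma admissible_rev_rot k a :
  all (fun x => x \in parts345) a -> rev a = rot k a -> admissible a.
Proof.
move=> a345 rev_a; split=> // x y _ _.
by rewrite !cyc_count_pair; apply: pair_count_sym rev_a.
Qed.

Definition admissibleb (a : seq nat) : bool :=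
  all (fun x => x \in parts345) a &&
  all (fun x => all (fun y => pair_count a x y == pair_count a y x) parts345) parts345.

Lemma admissibleb_admissible a : admissibleb a -> admissible a.
Proof.
case/andP=> a345 /allP sym; split=> // x y x345 y345.
by rewrite !cyc_count_pair; apply/eqP; move/allP: (sym x x345); apply.
Qed.

Lemma seq_pow_catC s k : seq_pow s k ++ s = s ++ seq_pow s k.
Proof. by elim: k => [|k IH] /=; rewrite ?cats0 // -catA IH. Qed.

Lemma rev_seq_pow s k : rev (seq_pow s k) = seq_pow (rev s) k.
Proof. by elim: k => [//|k IH] /=; rewrite rev_cat IH seq_pow_catC. Qed.

Lemma sumn_seq_pow s k : sumn (seq_pow s k) = k * sumn s.
Proof. by elim: k => [//|k IH] /=; rewrite sumn_cat IH mulSn. Qed.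

Lemma all_seq_pow (p : pred nat) s k : all p s -> all p (seq_pow s k).
Proof. by move=> ps; elim: k => [//|k IH] /=; rewrite all_cat ps. Qed.

Fixpoint lin_count (w b : seq nat) : nat :=
  if b is _ :: b' then prefix w b + lin_count w b' else 0.

Lemma lin_count_cons w x b : lin_count w (x :: b) = prefix w (x :: b) + lin_count w b.
Proof. by []. Qed.

Lemma lin_countE w b :
  lin_count w b = count (fun i => prefix w (drop i b)) (iota 0 (size b)).
Proof.
elim: b => [//|x b IH] /=; rewrite IH -(addn0 1) iotaDl count_map.
by congr (_ + _); apply: eq_count.
Qed.

Lemma lin_count_le_cyc_count w a : lin_count w a <= cyc_count a w.
Proof.
rewrite lin_countE cyc_countE; apply: sub_count => i /=.
case/prefixP=> u drop_ia; apply/allP => j; rewrite mem_iota add0n => /andP[_ lt_jw].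
have lt_ija : i + j < size a.
  by rewrite -ltn_subRL -size_drop drop_ia size_cat ltn_addr.
by rewrite modn_small // -nth_drop drop_ia nth_cat lt_jw.
Qed.

Lemma lin_count_cat w p q : lin_count w p + lin_count w q <= lin_count w (p ++ q).
Proof.
elim: p => [//|x p IH]; rewrite cat_cons !lin_count_cons -addnA leq_add //.
by case wp: (prefix w (x :: p)); rewrite // (prefix_catl q wp).
Qed.

Lemma lin_count_seq_pow w s k : k * lin_count w s <= lin_count w (seq_pow s k).
Proof.
elim: k => [//|k IH] /=.
by rewrite mulSn (leq_trans _ (lin_count_cat _ _ _)) ?leq_add2l.
Qed.

Definition short_partition (l : nat) : seq nat :=
  nseq (l %/ 3).-1 3 ++ [:: 3 + l %% 3].

Lemma short_partition_ok l : 3 <= l ->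
  cyc_partition l (short_partition l) /\ admissible (short_partition l).
Proof.
move=> l_ge3; set a := short_partition l.
have a345 : all (fun x => x \in parts345) a.
  rewrite all_cat all_nseq /= andbT !inE /= orbT /=.
  by case: (l %% 3) (ltn_mod l 3) => [|[|[|]]].
have suma : sumn a = l by rewrite sumn_cat sumn_nseq /= (divn_eq l 3); lia.
split; first exact: cyc_partition_parts.
apply: (admissible_rev_rot (l %/ 3).-1) => //.
rewrite /a /short_partition rev_cat rev_nseq.
by rewrite -{2}(size_nseq (l %/ 3).-1 3) rot_size_cat.
Qed.

Definition pal_center (r : nat) : seq nat :=
  match r with 0 => [::] | 1 => [:: 4; 5; 4] | 2 => [:: 4; 4] | 3 => [:: 3]
  | 4 => [:: 4] | _ => [:: 5] end.

Definition pal_filler (v : nat) : seq nat :=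
  let c := pal_center (v %% 6) in
  nseq ((v - sumn c) %/ 6) 3 ++ c ++ nseq ((v - sumn c) %/ 6) 3.

Lemma sumn_pal_filler v : 13 <= v -> sumn (pal_filler v) = v.
Proof.
move=> v_ge13; rewrite /pal_filler !sumn_cat !sumn_nseq.
move: (divn_eq v 6) (ltn_mod v 6).
by case: (v %% 6) => [|[|[|[|[|[|r]]]]]] /=; lia.
Qed.

Lemma rev_pal_filler v : rev (pal_filler v) = pal_filler v.
Proof.
rewrite /pal_filler !rev_cat !rev_nseq -catA; congr (_ ++ (_ ++ _)).
by case: (v %% 6) => [|[|[|[|[|[|r]]]]]].
Qed.

Lemma pal_filler_parts v : all (fun x => x \in parts345) (pal_filler v).
Proof.
rewrite /pal_filler !all_cat !all_nseq !orbT /=.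
by case: (v %% 6) => [|[|[|[|[|[|r]]]]]].
Qed.

Definition block : seq nat := nseq 16 3 ++ nseq 16 4 ++ nseq 16 5 ++
  seq_pow [:: 3; 4] 10 ++ seq_pow [:: 3; 5] 10 ++ seq_pow [:: 4; 5] 10.

Lemma sumn_block : sumn block = 432.
Proof. by vm_compute. Qed.

Lemma block_parts : all (fun x => x \in parts345) block.
Proof. by vm_compute. Qed.

Lemma block_lin_count x y : x \in parts345 -> y \in parts345 ->
  9 <= lin_count (seq_pow [:: x; y] 6) block
       + lin_count (seq_pow [:: x; y] 6) (rev block).
Proof. by rewrite !inE => /or3P[]/eqP-> /or3P[]/eqP->; vm_compute. Qed.

Definition big_partition (l : nat) : seq nat :=
  let k := (l - 13) %/ 864 in
  seq_pow block k ++ pal_filler (l - 864 * k) ++ seq_pow (rev block) k.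

Lemma big_partition_ok l : 877 <= l ->
  cyc_partition l (big_partition l) /\ admissible (big_partition l) /\
  forall x y, x \in parts345 -> y \in parts345 ->
    l <= 200 * cyc_count (big_partition l) (seq_pow [:: x; y] 6).
Proof.
rewrite /big_partition => l_ge; set k := (l - 13) %/ 864.
have k_lb : 864 * k <= l - 13 by rewrite /k; lia.
have k_ub : l - 13 < 864 * k + 864 by rewrite /k; lia.
have sumD : sumn (pal_filler (l - 864 * k)) = l - 864 * k by apply: sumn_pal_filler; lia.
move: (pal_filler _) (pal_filler_parts (l - 864 * k)) (rev_pal_filler (l - 864 * k)) sumD
  => D D345 revD sumD.
move: block sumn_block block_parts block_lin_count => B sumB B345 B9.
set a := seq_pow B k ++ D ++ seq_pow (rev B) k.
have a345 : all (fun x => x \in parts345) a.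
  by rewrite !all_cat D345 !all_seq_pow ?all_rev.
have rev_a : rev a = rot 0 a.
  by rewrite rot0 !rev_cat !rev_seq_pow revK revD -catA.
split.
  apply: cyc_partition_parts => //.
  by rewrite !sumn_cat !sumn_seq_pow sumn_rev sumB sumD; lia.
split; first exact: admissible_rev_rot rev_a.
move=> x y x345 y345; set w := seq_pow [:: x; y] 6.
have : k * (lin_count w B + lin_count w (rev B)) <= cyc_count a w.
  apply: leq_trans (lin_count_le_cyc_count _ _); rewrite mulnDr.
  apply: leq_trans (lin_count_cat _ _ _); apply: leq_add; first exact: lin_count_seq_pow.
  apply: leq_trans (lin_count_cat _ _ _); apply: leq_trans (lin_count_seq_pow _ _ _) _.
  exact: leq_addl.
have occ_B : 9 <= lin_count w B + lin_count w (rev B) by exact: B9.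
move=> /(leq_trans (leq_mul (leqnn k) occ_B)); lia.
Qed.

Definition mid_partition (l : nat) : seq nat :=
  let n := l %/ 200 + 1 in
  let q := n + 5 in let c := n + 11 in
  let base := 24 * q + 5 * c + 4 in
  let b := n + 11 + (l - base - 4 * (n + 11)) %% 3 in
  let a := (l - base - 4 * b) %/ 3 in
  nseq a 3 ++ seq_pow [:: 4; 3] q ++ nseq b 4 ++ seq_pow [:: 5; 4] q ++
  nseq c 5 ++ seq_pow [:: 3; 5] q ++ [:: 4].

Definition pow6_lin_rich (l : nat) (a : seq nat) : bool :=
  all (fun x => all (fun y =>
    l <= 200 * lin_count (seq_pow [:: x; y] 6) a) parts345) parts345.

Lemma pow6_lin_rich_cyc_count l a x y :
  pow6_lin_rich l a -> x \in parts345 -> y \in parts345 ->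
  l <= 200 * cyc_count a (seq_pow [:: x; y] 6).
Proof.
move=> /allP rich x345 y345; move/allP: (rich x x345) => /(_ y y345) /leq_trans; apply.
by rewrite leq_mul2l lin_count_le_cyc_count orbT.
Qed.

Lemma mid_partition_good :
  all (fun l => [&& sumn (mid_partition l) == l, admissibleb (mid_partition l)
                  & pow6_lin_rich l (mid_partition l)]) (iota 500 377).
Proof. by vm_compute. Qed.

Theorem proposition4p1 :
  (forall l : nat, 3 <= l ->
     exists a : seq nat, cyc_partition l a /\ admissible a) /\
  (forall l : nat, 500 <= l ->
     exists a : seq nat, cyc_partition l a /\ admissible a /\
       forall x y, x \in parts345 -> y \in parts345 ->
         l <= 200 * cyc_count a (seq_pow [:: x; y] 6)).
Proof.
split=> l l_ge; first by exists (short_partition l); exact: short_partition_ok.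
have [l_big | l_mid] := leqP 877 l.
  by exists (big_partition l); exact: big_partition_ok.
have l_range : l \in iota 500 377 by rewrite mem_iota; lia.
have /and3P[/eqP sum_a /admissibleb_admissible adm_a rich_a] :=
  allP mid_partition_good l l_range.
exists (mid_partition l); split; first by apply: cyc_partition_parts; case: adm_a.
by split=> // x y; exact: pow6_lin_rich_cyc_count.
Qed.
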